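(* Let $P=\{P_n\}_{n\ge0}$ be a $\Sigma$-collection of sets (each $P_n$ carries an action of the symmetric group $\mathbb S_n$). Then there is a bijection between operad structures on $P$ (unit $e\in P_1$ and compositions $\gamma_{m_1,\ldots,m_n}:P_n\times P_{m_1}\times\cdots\times P_{m_n}\to P_{m_1+\cdots+m_n}$ satisfying the usual associativity, unitality and equivariance conditions) and structures of a monoid on $\underline P$ in $(\underline{Cat},\ltimes,\underline{\bf 1})$, given by $\{F,\rho\}:\underline P\ltimes\underline P\to\underline P$ and $\{I,\iota\}:\underline{\bf1}\to\underline P$ satisfying the associativity and unit axioms, such that $\rho$ and $\iota$ are natural isomorphisms whose components preserve the linear orders on the categories ${\bf n}$ (with $R(p)\ltimes_\psi\underline P=\coprod_{i=1}^n{\bf m_i}$, for $p\in P_n$ and $\psi$ picking $p_i\in P_{m_i}$, ordered lexicographically).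
   Context: $\underline{Cat}$ is the category whose objects are pairs $\underline D=\{D,R\}$ with $D$ a small category and $R:D\to Cat$ a functor, and whose morphisms $\{D,R\}\to\{D',R'\}$ are pairs $\{F,\rho\}$ with $F:D\to D'$ a functor and $\rho:R'\circ F\Rightarrow R$ a natural transformation. Semi-direct product: for $\underline D=\{D,R\}$, $\underline D'=\{D',R'\}$, an object $d\in D$ and a functor $\psi:R(d)\to D'$, the category $R(d)\ltimes_\psi\underline D'$ has objects pairs $\{a,b\}$ with $a\in R(d)$, $b\in R'\psi(a)$; morphisms $\{a_1,b_1\}\to\{a_2,b_2\}$ are pairs $\{\alpha,\beta\}$ with $\alpha:a_1\to a_2$ in $R(d)$ and $\beta:R'\psi(\alpha)(b_1)\to b_2$ in $R'\psi(a_2)$; composition is $\{\alpha_2,\beta_2\}\circ\{\alpha_1,\beta_1\}=\{\alpha_2\alpha_1,\beta_2\circ R'\psi(\alpha_2)(\beta_1)\}$. The category $D\ltimes D'$ has objects pairs $\{d,\psi_d\}$ with $d\in D$ and $\psi_d:R(d)\to D'$ a functor; morphisms $\{d_1,\psi_{d_1}\}\to\{d_2,\psi_{d_2}\}$ are pairs $\{f,\phi\}$ with $f:d_1\to d_2$ in $D$ and $\phi:\psi_{d_1}\Rightarrow\psi_{d_2}\circ R(f)$ a natural transformation. The functor $R\ltimes R':D\ltimes D'\to Cat$ sends $\{d,\psi_d\}$ to $R(d)\ltimes_{\psi_d}\underline D'$ and a morphism $\{f,\phi\}$ to the functor sending $\{\alpha,\beta\}:\{a_1,b_1\}\to\{a_2,b_2\}$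 to $\{R(f)(\alpha),R'(\phi_{a_2})(\beta)\}$. Then $\underline D\ltimes\underline D':=\{D\ltimes D',R\ltimes R'\}$. On morphisms, $\{F,\rho\}\ltimes\{F',\rho'\}$ sends $\{d,\psi\}$ to $\{F(d),F'\circ\psi\circ\rho_d\}$, with the evident accompanying natural transformation $\{a,b\}\mapsto\{\rho_d(a),\rho'_{\psi\rho_d(a)}(b)\}$. The unit $\underline{\bf 1}$ is the one-object discrete category ${\bf 1}$ with the functor sending its object to ${\bf 1}\in Cat$. With these, $(\underline{Cat},\ltimes,\underline{\bf1})$ is a monoidal category. For $n\ge0$, ${\bf n}$ is a discrete category with $n$ linearly ordered objects, and an isomorphism $\mathbb S_n\cong\mathrm{Aut}({\bf n})$ is fixed. For a $\Sigma$-collection $P$, $\underline P=\{P,R\}$ where the category $P$ has object set $\coprod_{n\ge0}P_n$, and for $p,q\in P_n$, $\mathrm{Hom}(p,q)=\{\sigma\in\mathbb S_n:\sigma(p)=q\}$ (no morphisms between different arities), composition given by the group law; $R$ sends every $p\in P_n$ to ${\bf n}$ and a morphism $\sigma$ to the corresponding automorphism of ${\bf n}$. *)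

From Stdlib Require Import Eqdep_dec.
From HB Require Import structures.
From mathcomp Require Import all_boot all_fingroup.
Set Implicit Arguments. Unset Strict Implicit. Unset Printing Implicit Defensive.

(* composition).  All instances built below are genuine categories.          *)
Record cat := Cat {
  ob : Type;
  hom : ob -> ob -> Type;
  idc : forall x, hom x x;
  comp : forall x y z, hom y z -> hom x y -> hom x z }.
Arguments hom {c}. Arguments idc {c}. Arguments comp {c x y z}.

(* An object {D,R} of Cat-underline whose functor R : D -> Cat takes values  *)
(* in discrete categories (identified with their sets of objects).  All the  *)
(* objects relevant to the statement (P-underline, 1-underline and their     *)
(* iterated semi-direct products) are of this kind, and this full            *)
(* subcategory of Cat-underline is closed under the semi-direct product.    *)
Record dcat := DCat {
  dC :> cat;
  fib : ob dC -> Type;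
  fibh : forall x y, hom x y -> fib x -> fib y;
  fibh_id : forall x a, fibh (idc x) a = a;
  fibh_comp : forall x y z (g : hom y z) (f : hom x y) a,
      fibh (comp g f) a = fibh g (fibh f a) }.
Arguments fib {d}. Arguments fibh {d x y}.

Section SemiDirect.
Variables X Y : dcat.

Definition sd_ob := {d : ob X & fib d -> ob Y}.
Definition sd_hom (u v : sd_ob) :=
  {f : hom (projT1 u) (projT1 v) &
     forall a, hom (projT2 u a) (projT2 v (fibh f a))}.
Definition sd_id (u : sd_ob) : sd_hom u u :=
  existT _ (idc (projT1 u))
    (fun a => eq_rect_r (fun z => hom (projT2 u a) (projT2 u z))
                (idc (projT2 u a)) (fibh_id a)).
Definition sd_comp (u v w : sd_ob) (g : sd_hom v w) (f : sd_hom u v) : sd_hom u w :=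
  existT _ (comp (projT1 g) (projT1 f))
    (fun a => eq_rect_r (fun z => hom (projT2 u a) (projT2 w z))
                (comp (projT2 g (fibh (projT1 f) a)) (projT2 f a))
                (fibh_comp (projT1 g) (projT1 f) a)).
Definition sd_cat : cat := @Cat sd_ob sd_hom sd_id sd_comp.

Definition sd_fib (u : sd_ob) := {a : fib (projT1 u) & fib (projT2 u a)}.
Definition sd_fibh (u v : sd_ob) (f : sd_hom u v) (c : sd_fib u) : sd_fib v :=
  existT _ (fibh (projT1 f) (projT1 c)) (fibh (projT2 f (projT1 c)) (projT2 c)).

Lemma sd_fibh_id (u : sd_ob) c : sd_fibh (sd_id u) c = c.
Proof.
case: u c => d psi [a b] /=; rewrite /sd_fibh /=.
move: (fibh_id a); set z := fibh (idc d) a; clearbody z => e.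
by subst z; rewrite /= fibh_id.
Qed.

Lemma sd_fibh_comp (u v w : sd_ob) (g : sd_hom v w) (f : sd_hom u v) c :
  sd_fibh (sd_comp g f) c = sd_fibh g (sd_fibh f c).
Proof.
case: c => a b; rewrite /sd_fibh /=.
move: (fibh_comp (projT1 g) (projT1 f) a).
set z := fibh (comp _ _) a; clearbody z => e.
by subst z; rewrite /= fibh_comp.
Qed.

Definition sd : dcat := @DCat sd_cat sd_fib sd_fibh sd_fibh_id sd_fibh_comp.
End SemiDirect.

Definition one_cat : cat := @Cat unit (fun _ _ => unit) (fun _ => tt) (fun _ _ _ _ _ => tt).
Definition one : dcat :=
  @DCat one_cat (fun _ => unit) (fun _ _ _ a => a) (fun _ _ => erefl) (fun _ _ _ _ _ _ => erefl).

(* Morphisms {F, rho} : {D,R} -> {D',R'} with rho : R' o F => R.             *)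
Record dmor (X Y : dcat) := DMor {
  dob : ob X -> ob Y;
  dhom : forall x y, hom x y -> hom (dob x) (dob y);
  dnat : forall x, fib (dob x) -> fib x }.
Arguments dob {X Y}. Arguments dhom {X Y} _ {x y}. Arguments dnat {X Y}.

(* genuine morphisms: F a functor, rho a natural transformation *)
Record cmor (X Y : dcat) := CMor {
  cm :> dmor X Y;
  cm_id : forall x, dhom cm (idc x) = idc (dob cm x);
  cm_comp : forall x y z (g : hom y z) (f : hom x y),
      dhom cm (comp g f) = comp (dhom cm g) (dhom cm f);
  cm_nat : forall x y (f : hom x y) a,
      dnat cm y (fibh (dhom cm f) a) = fibh f (dnat cm x a) }.

Definition cid (X : dcat) : cmor X X :=
  @CMor X X (@DMor X X id (fun _ _ f => f) (fun _ a => a))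
     (fun _ => erefl) (fun _ _ _ _ _ => erefl) (fun _ _ _ _ => erefl).

Definition dcomp (X Y Z : dcat) (N : dmor Y Z) (M : dmor X Y) : dmor X Z :=
  @DMor X Z (fun x => dob N (dob M x)) (fun x y f => dhom N (dhom M f))
     (fun x c => dnat M x (dnat N (dob M x) c)).

Definition dmor_eq (X Y : dcat) (M N : dmor X Y) : Prop :=
  [/\ forall x, dob M x = dob N x,
      forall x y (f : hom x y),
        existT (fun xy : ob Y * ob Y => hom xy.1 xy.2) (dob M x, dob M y) (dhom M f)
        = existT (fun xy : ob Y * ob Y => hom xy.1 xy.2) (dob N x, dob N y) (dhom N f)
    & forall x,
        existT (fun y : ob Y => fib y -> fib x) (dob M x) (dnat M x)
        = existT (fun y : ob Y => fib y -> fib x) (dob N x) (dnat N x)].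

Definition msd (X X' Y Y' : dcat) (M : cmor X X') (N : cmor Y Y') :
  dmor (sd X Y) (sd X' Y') :=
  @DMor (sd X Y) (sd X' Y')
    (fun u => existT (fun d' => fib d' -> ob Y') (dob M (projT1 u))
                 (fun a' => dob N (projT2 u (dnat M (projT1 u) a'))))
    (fun u v h =>
       existT _ (dhom M (projT1 h))
         (fun a' => eq_rect_r
            (fun z => hom (dob N (projT2 u (dnat M (projT1 u) a'))) (dob N (projT2 v z)))
            (dhom N (projT2 h (dnat M (projT1 u) a')))
            (@cm_nat _ _ M _ _ (projT1 h) a')))
    (fun u c => existT _ (dnat M (projT1 u) (projT1 c))
                         (dnat N (projT2 u (dnat M (projT1 u) (projT1 c))) (projT2 c))).

Definition assoc_mor (X Y Z : dcat) : dmor (sd (sd X Y) Z) (sd X (sd Y Z)) :=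
  @DMor (sd (sd X Y) Z) (sd X (sd Y Z))
    (fun u => existT (fun d => fib d -> ob (sd Y Z)) (projT1 (projT1 u))
       (fun a => existT (fun e => fib e -> ob Z) (projT2 (projT1 u) a)
                   (fun b => projT2 u (existT _ a b))))
    (fun u v h => existT _ (projT1 (projT1 h))
       (fun a => existT _ (projT2 (projT1 h) a) (fun b => projT2 h (existT _ a b))))
    (fun u c => existT _ (existT _ (projT1 c) (projT1 (projT2 c))) (projT2 (projT2 c))).

Definition lunitor (X : dcat) : dmor (sd one X) X :=
  @DMor (sd one X) X (fun u => projT2 u tt) (fun u v h => projT2 h tt)
    (fun u b => existT _ tt b).
Definition runitor (X : dcat) : dmor (sd X one) X :=
  @DMor (sd X one) X (fun u => projT1 u) (fun u v h => projT1 h)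
    (fun u a => existT (fun _ => unit) a tt).

(* Sigma-collections.  S_n = Aut(n) acts on P_n; the group law of 'S_n is    *)
(* composition of automorphisms ((s * t) i = t (s i) in MathComp), and the   *)
(* action is compatible with it: (t o s)(p) = t(s(p)).                       *)
Record scoll := SColl {
  sc :> nat -> Type;
  act : forall n, 'S_n -> sc n -> sc n;
  act1 : forall n (x : sc n), act 1%g x = x;
  actM : forall n (s t : 'S_n) (x : sc n), act (s * t)%g x = act t (act s x) }.
Arguments act {_ _} _ _.

Section PCat.
Variable P : scoll.

Definition P_ob := {n : nat & P n}.
(* Hom(p,q) = { sigma in S_n | sigma(p) = q }  (empty if arities differ) *)
Definition P_hom (u v : P_ob) := {s : 'S_(tag u) | existT P (tag u) (act s (tagged u)) = v}.

Lemma P_id_proof (u : P_ob) : existT P (tag u) (act 1%g (tagged u)) = u.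
Proof. by case: u => n p /=; rewrite act1. Qed.
Definition P_id (u : P_ob) : P_hom u u := exist _ (1%g : 'S_(tag u)) (P_id_proof u).

Definition P_ar (u v : P_ob) (f : P_hom u v) : tag u = tag v :=
  f_equal (@projT1 nat P) (proj2_sig f).

Lemma P_comp_proof n (p : P n) (v w : P_ob) (sf : 'S_n) (sg : 'S_(tag v))
  (e : tag v = n) :
  existT P n (act sf p) = v -> existT P (tag v) (act sg (tagged v)) = w ->
  existT P n (act (sf * cast_perm e sg)%g p) = w.
Proof.
case: v sg e => m q /= sg e; subst m => H1 H2.
have {}H1 := inj_pair2_eq_dec _ (fun x y : nat => decP (@eqP _ x y)) _ _ _ _ H1.
by rewrite actM cast_perm_id H1.
Qed.

Definition P_comp (u v w : P_ob) (g : P_hom v w) (f : P_hom u v) : P_hom u w :=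
  exist _ (sval f * cast_perm (esym (P_ar f)) (sval g))%g
    (@P_comp_proof (tag u) (tagged u) v w (sval f) (sval g)
       (esym (P_ar f)) (proj2_sig f) (proj2_sig g)).

Definition P_cat : cat := @Cat P_ob P_hom P_id P_comp.

Definition P_fib (u : P_ob) := 'I_(tag u).
Definition P_fibh (u v : P_ob) (f : P_hom u v) (i : P_fib u) : P_fib v :=
  cast_ord (P_ar f) (sval f i).

Lemma P_fibh_id (u : P_ob) i : P_fibh (P_id u) i = i.
Proof. by apply: val_inj; rewrite /= perm1. Qed.

Lemma P_fibh_comp (u v w : P_ob) (g : P_hom v w) (f : P_hom u v) i :
  P_fibh (P_comp g f) i = P_fibh g (P_fibh f i).
Proof.
apply: val_inj; rewrite /P_fibh /= permM cast_permE /=.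
by congr (nat_of_ord (sval g _)); apply: val_inj.
Qed.

Definition uP : dcat := @DCat P_cat P_fib P_fibh P_fibh_id P_fibh_comp.
End PCat.

Definition lexle (P : scoll) (x : ob (sd (uP P) (uP P))) (c d : fib x) : bool :=
  let a1 := nat_of_ord (projT1 c : 'I_(tag (projT1 x))) in
  let a2 := nat_of_ord (projT1 d : 'I_(tag (projT1 x))) in
  (a1 < a2) || ((a1 == a2) &&
     (nat_of_ord (projT2 c : 'I_(tag (projT2 x (projT1 c))))
       <= nat_of_ord (projT2 d : 'I_(tag (projT2 x (projT1 d)))))).

Record monoid_str (P : scoll) := MonStr {
  ms_mu : cmor (sd (uP P) (uP P)) (uP P);
  ms_eta : cmor one (uP P);
  ms_assoc : dmor_eq (dcomp ms_mu (msd ms_mu (cid (uP P))))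
                     (dcomp ms_mu (dcomp (msd (cid (uP P)) ms_mu)
                                         (assoc_mor (uP P) (uP P) (uP P))));
  ms_unitl : dmor_eq (dcomp ms_mu (msd ms_eta (cid (uP P)))) (lunitor (uP P));
  ms_unitr : dmor_eq (dcomp ms_mu (msd (cid (uP P)) ms_eta)) (runitor (uP P));
  ms_mu_iso : forall x, bijective (dnat ms_mu x);
  ms_mu_ord : forall x (i j : 'I_(tag (dob ms_mu x))),
      i <= j -> lexle (dnat ms_mu x i) (dnat ms_mu x j);
  ms_eta_iso : forall x, bijective (dnat ms_eta x) }.

(* Operads.  join m i j : index of input j of the i-th block in the          *)
(* concatenation 'I_(m_0 + ... + m_(n-1)) (lexicographic order).            *)
Definition offs n (m : 'I_n -> nat) (i : 'I_n) := \sum_(k < n | k < i) m k.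

Lemma join_subproof n (m : 'I_n -> nat) (i : 'I_n) (j : 'I_(m i)) :
  offs m i + j < \sum_(k < n) m k.
Proof.
rewrite (bigID (fun k : 'I_n => k < i)) /=.
rewrite ltn_add2l (bigD1 i) ?ltnn //=.
exact: leq_trans (ltn_ord j) (leq_addr _ _).
Qed.

Definition join n (m : 'I_n -> nat) (i : 'I_n) (j : 'I_(m i)) : 'I_(\sum_(k < n) m k) :=
  Ordinal (join_subproof j).
Arguments join {n} m i j.

Unset Implicit Arguments.
Record operad (P : scoll) := Operad {
  op_e : P 1;
  op_g : forall n (p : P n) (m : 'I_n -> nat), (forall i, P (m i)) -> P (\sum_(i < n) m i);
  op_unitl : forall (m : 'I_1 -> nat) (q : forall i, P (m i)),
      existT P _ (op_g 1 op_e m q) = existT P _ (q ord0);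
  op_unitr : forall n (p : P n),
      existT P _ (op_g n p (fun _ => 1) (fun _ => op_e)) = existT P n p;
  op_assoc : forall n (p : P n) (m : 'I_n -> nat) (q : forall i, P (m i))
      (l : 'I_(\sum_(i < n) m i) -> nat) (r : forall j, P (l j)),
      existT P _ (op_g _ (op_g n p m q) l r)
      = existT P _ (op_g n p (fun i => \sum_(j < m i) l (join m i j))
                     (fun i => op_g (m i) (q i) (fun j => l (join m i j)) (fun j => r (join m i j))));
  op_equiv1 : forall n (s : 'S_n) (p : P n) (m : 'I_n -> nat) (q : forall i, P (m i)),
      exists t : 'S_(\sum_(i < n) m (s i)),
        (forall a (b : 'I_(m (s a))),
            nat_of_ord (t (join (fun i => m (s i)) a b)) = nat_of_ord (join m (s a) b))
        /\ existT P _ (act t (op_g n p (fun i => m (s i)) (fun i => q (s i))))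
           = existT P _ (op_g n (act s p) m q);
  op_equiv2 : forall n (p : P n) (m : 'I_n -> nat) (q : forall i, P (m i))
      (tau : forall i, 'S_(m i)),
      exists t : 'S_(\sum_(i < n) m i),
        (forall a (b : 'I_(m a)), t (join m a b) = join m a (tau a b))
        /\ act t (op_g n p m q) = op_g n p m (fun i => act (tau i) (q i)) }.
Set Implicit Arguments.
Arguments op_e {P}. Arguments op_g {P}.

From Pilot Require Import Defs.
From HB Require Import structures.
From mathcomp Require Import all_boot all_fingroup zify.
From Stdlib Require Import FunctionalExtensionality ProofIrrelevance Eqdep Eqdep_dec ClassicalEpsilon.
Set Implicit Arguments. Unset Strict Implicit. Unset Printing Implicit Defensive.

(* The correspondence is [mu {p, (q_1, ..., q_n)} = gamma(p; q_1, ..., q_n)]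
   and [eta * = e].  The natural isomorphism [rho] is an order-preserving
   bijection from the linear order [m_1 + ... + m_n] onto
   [coprod_i m_i] ordered lexicographically, so it can only be the standard
   block indexing [unjoin]; hence [mu] is determined on objects by [gamma] and
   on arrows by the naturality of [rho].  Through this dictionary the monoid
   axioms on objects are the associativity and unit axioms of [gamma], the
   functoriality of [mu] on the arrows [{sigma, id}] and [{id, (tau_i)}] of
   [uP P |x uP P] gives the two equivariance axioms, and the associativity of
   [rho] amounts to the two lexicographic indexings of triples agreeing. *)

Section BlockIndex.
Variables (n : nat) (m : 'I_n -> nat).

Lemma offsD_leq (a a' : 'I_n) : a < a' -> offs m a + m a <= offs m a'.
Proof.
move=> lt; rewrite /offs (bigID (fun k : 'I_n => k < a) (fun k : 'I_n => k < a')) /=.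
rewrite [X in _ <= X + _](eq_bigl (fun k : 'I_n => k < a)); last first.
  by move=> k /=; case: (ltnP k a) => ka; rewrite ?andbF ?andbT // (ltn_trans ka lt).
by rewrite leq_add2l (bigD1 a) /= ?lt ?ltnn // leq_addr.
Qed.

Lemma offsD_ltn (a a' : 'I_n) x x' : x < m a -> a < a' -> offs m a + x < offs m a' + x'.
Proof. by move=> xa /offsD_leq; lia. Qed.

Lemma leq_offsD (a a' : 'I_n) x x' : x < m a -> x' < m a' ->
  (offs m a + x <= offs m a' + x') = (a < a') || ((a == a' :> nat) && (x <= x')).
Proof.
move=> xa xa'; case: (ltngtP a a') => [lt|gt|/val_inj eq] /=.
- by have := offsD_ltn x' xa lt; lia.
- by have := offsD_ltn x xa' gt; lia.
- by subst a'; rewrite leq_add2l.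
Qed.

Lemma ltn_offsD (a a' : 'I_n) x x' : x < m a -> x' < m a' ->
  (offs m a + x < offs m a' + x') = (a < a') || ((a == a' :> nat) && (x < x')).
Proof.
move=> xa xa'; rewrite ltnNge leq_offsD // eq_sym.
by case: ltngtP => //=; rewrite -ltnNge.
Qed.

Definition join_tag (c : {a : 'I_n & 'I_(m a)}) : 'I_(\sum_(i < n) m i) :=
  join m (tag c) (tagged c).

Lemma leq_join_tag c d : (join_tag c <= join_tag d) =
  (tag c < tag d) || ((tag c == tag d :> nat) && (tagged c <= tagged d)).
Proof. exact: leq_offsD. Qed.

Lemma ltn_join_tag c d : (join_tag c < join_tag d) =
  (tag c < tag d) || ((tag c == tag d :> nat) && (tagged c < tagged d)).
Proof. exact: ltn_offsD. Qed.

Lemma join_tag_inj : injective join_tag.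
Proof.
move=> [a x] [a' x'] E; have := leq_join_tag (Tagged _ x) (Tagged _ x').
have := leq_join_tag (Tagged _ x') (Tagged _ x); rewrite E leqnn /=.
case: ltngtP => //= /val_inj eq_a; subst a' => /esym le_x'x /esym le_xx'.
by congr existT; apply/val_inj/eqP; rewrite eqn_leq le_xx' le_x'x.
Qed.

Lemma card_blocks : #|{: {a : 'I_n & 'I_(m a)}}| = \sum_(i < n) m i.
Proof.
rewrite card_tagged sumnE big_map big_enum /=.
by apply: eq_bigr => i _; rewrite card_ord.
Qed.

Lemma join_tag_onto k : exists c, join_tag c == k.
Proof.
have := @inj_card_onto _ _ join_tag join_tag_inj.
rewrite card_ord card_blocks leqnn => /(_ isT k) /codomP [c ->].
by exists c.
Qed.

Definition unjoin (k : 'I_(\sum_(i < n) m i)) : {a : 'I_n & 'I_(m a)} :=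
  xchoose (join_tag_onto k).

Lemma unjoinK : cancel unjoin join_tag.
Proof. by move=> k; apply/eqP; exact: xchooseP (join_tag_onto k). Qed.

Lemma join_tagK : cancel join_tag unjoin.
Proof. by move=> c; apply: join_tag_inj; rewrite unjoinK. Qed.

Lemma unjoin_join a (x : 'I_(m a)) : unjoin (join m a x) = Tagged _ x.
Proof. exact: join_tagK (Tagged _ x). Qed.

End BlockIndex.
Arguments join_tag {n} m c.
Arguments unjoin {n} m k.
Arguments unjoinK {n} m.
Arguments join_tagK {n} m.

Lemma offs0 n (m : 'I_n.+1 -> nat) : offs m ord0 = 0.
Proof. by rewrite /offs big_pred0. Qed.

Lemma offs_cst1 n (a : 'I_n) : offs (fun _ : 'I_n => 1) a = a.
Proof.
rewrite /offs -(big_ord_widen n (fun _ => 1) (ltnW (ltn_ord a))).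
by rewrite sum1_card card_ord.
Qed.

Lemma leq_incr_ord K (f : 'I_K -> nat) :
  (forall i j : 'I_K, i < j -> f i < f j) -> forall i : 'I_K, i <= f i.
Proof.
move=> incr; suff ge k (lt_kK : k < K) : k <= f (Ordinal lt_kK) by case.
elim: k lt_kK => [//|k IHk] lt_kK.
exact: leq_ltn_trans (IHk (ltnW lt_kK)) (incr _ _ _).
Qed.

(* [leq_incr_ord] applied to [f] and to [j |-> K.-1 - f (rev_ord j)] gives both
   inequalities. *)
Lemma incr_ord_id K (f : 'I_K -> nat) :
  (forall i j : 'I_K, i < j -> f i < f j) -> (forall i, f i < K) ->
  forall i : 'I_K, f i = i.
Proof.
move=> incr bnd i.
have incr_rev (j j' : 'I_K) : j < j' -> K.-1 - f (rev_ord j) < K.-1 - f (rev_ord j').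
  have := incr (rev_ord j') (rev_ord j); have := bnd (rev_ord j); have := ltn_ord j'.
  by rewrite /=; lia.
have := leq_incr_ord incr_rev (rev_ord i); rewrite rev_ordK /=.
by have := leq_incr_ord incr i; have := bnd i; lia.
Qed.

Section BlockIndex3.
Variables (n : nat) (m : 'I_n -> nat) (T : {a : 'I_n & 'I_(m a)} -> nat).
Local Notation triple := {c : {a : 'I_n & 'I_(m a)} & 'I_(T c)}.

Definition T_flat (k : 'I_(\sum_(i < n) m i)) := T (unjoin m k).
Definition T_at (a : 'I_n) (b : 'I_(m a)) := T (Tagged (fun a => 'I_(m a)) b).
Definition T_sum (a : 'I_n) := \sum_(b < m a) T_at b.

Definition unjoin_outer (k : 'I_(\sum_(j < \sum_(i < n) m i) T_flat j)) : triple :=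
  let c := unjoin T_flat k in Tagged (fun c => 'I_(T c)) (tagged c : 'I_(T (unjoin m (tag c)))).

Definition unjoin_inner (k : 'I_(\sum_(a < n) T_sum a)) : triple :=
  let d := unjoin T_sum k in let e := unjoin (@T_at (tag d)) (tagged d) in
  Tagged (fun c => 'I_(T c)) (tagged e : 'I_(T (Tagged _ (tag e)))).

Definition outer_rank (x : triple) := offs T_flat (join_tag m (tag x)) + tagged x.

Lemma ltn_tagged_flat (x : triple) : tagged x < T_flat (join_tag m (tag x)).
Proof. by rewrite /T_flat join_tagK. Qed.

Lemma outer_rank_lt x : outer_rank x < \sum_(j < \sum_(i < n) m i) T_flat j.
Proof. exact: join_subproof (Ordinal (ltn_tagged_flat x)). Qed.

Lemma outer_rank_inj : injective outer_rank.
Proof.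
move=> [c z] [c' z'] E.
have := leq_offsD (ltn_tagged_flat (Tagged _ z)) (ltn_tagged_flat (Tagged _ z')).
have := leq_offsD (ltn_tagged_flat (Tagged _ z')) (ltn_tagged_flat (Tagged _ z)).
rewrite /outer_rank /= in E *; rewrite E leqnn /=.
case: ltngtP => [//=|//=|eq_c /= le_z'z le_zz'].
have /join_tag_inj eq_c' : join_tag m c' = join_tag m c by exact: val_inj.
by subst c'; congr existT; apply/val_inj/eqP; rewrite eqn_leq -le_z'z -le_zz'.
Qed.

Lemma outer_rank_unjoin_outer k : outer_rank (unjoin_outer k) = k.
Proof. by rewrite /outer_rank /unjoin_outer /= unjoinK -[in RHS](unjoinK T_flat k). Qed.

Lemma outer_rank_ltn (c c' : {a : 'I_n & 'I_(m a)}) (z : 'I_(T c)) (z' : 'I_(T c')) :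
  join_tag m c < join_tag m c' -> outer_rank (Tagged _ z) < outer_rank (Tagged _ z').
Proof. exact: offsD_ltn (ltn_tagged_flat (Tagged _ z)). Qed.

Lemma outer_rank_inner_incr (k k' : 'I_(\sum_(a < n) T_sum a)) :
  k < k' -> outer_rank (unjoin_inner k) < outer_rank (unjoin_inner k').
Proof.
rewrite -(unjoinK T_sum k) -(unjoinK T_sum k') ltn_join_tag /unjoin_inner !join_tagK.
case: (unjoin T_sum k) (unjoin T_sum k') => a y [a' y'] /=.
case/orP=> [lt_a|/andP [/eqP /val_inj eq_a lt_y]].
  by apply: outer_rank_ltn; rewrite ltn_join_tag /= lt_a.
subst a'; move: lt_y; rewrite -(unjoinK (@T_at a) y) -(unjoinK (@T_at a) y').
rewrite ltn_join_tag !join_tagK.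
case: (unjoin _ y) (unjoin _ y') => b z [b' z'] /=.
case/orP=> [lt_b|/andP [/eqP /val_inj eq_b lt_z]].
  by apply: outer_rank_ltn; rewrite ltn_join_tag /= ltnn eqxx lt_b orbT.
by subst b'; rewrite /outer_rank /= ltn_add2l.
Qed.

Lemma unjoin_outer_inner :
  \sum_(a < n) T_sum a = \sum_(j < \sum_(i < n) m i) T_flat j ->
  forall k k', val k = val k' -> unjoin_outer k = unjoin_inner k'.
Proof.
move=> e k k' kk'; apply: outer_rank_inj; rewrite outer_rank_unjoin_outer kk'; apply: esym.
apply: (incr_ord_id (f := fun k => outer_rank (unjoin_inner k))) => [|j].
  exact: outer_rank_inner_incr.
by rewrite e outer_rank_lt.
Qed.

End BlockIndex3.

Definition natural (X Y : dcat) (M : dmor X Y) :=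
  forall x y (f : hom x y) a, dnat M y (fibh (dhom M f) a) = fibh f (dnat M x a).

Definition dinj (X Y : dcat) (M : dmor X Y) := forall x, injective (dnat M x).

Section MorphismProperties.
Variables X Y Z : dcat.

Lemma natural_cmor (M : cmor X Y) : natural M.
Proof. exact: cm_nat. Qed.

Lemma natural_dcomp (N : dmor Y Z) (M : dmor X Y) :
  natural N -> natural M -> natural (dcomp N M).
Proof. by move=> natN natM x y f a /=; rewrite natN natM. Qed.

Lemma dinj_dcomp (N : dmor Y Z) (M : dmor X Y) : dinj N -> dinj M -> dinj (dcomp N M).
Proof. by move=> injN injM x a b /= /injM /injN. Qed.

Variables X' Y' : dcat.

Lemma natural_msd (M : cmor X X') (N : cmor Y Y') : natural (msd M N).
Proof.
move=> u v h [a b] /=; rewrite /sd_fibh /=.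
move: (@cm_nat _ _ M _ _ (projT1 h) a).
set z := dnat M (projT1 v) (fibh (dhom M (projT1 h)) a); clearbody z => e.
by subst z; rewrite /= cm_nat.
Qed.

Lemma dinj_msd (M : cmor X X') (N : cmor Y Y') : dinj M -> dinj N -> dinj (msd M N).
Proof.
move=> injM injN u [a b] [a' b'] /= E.
have eq_a := injM _ _ _ (f_equal (@projT1 _ _) E); subst a'.
by move: (inj_pair2 _ _ _ _ _ E) => /injN ->.
Qed.

End MorphismProperties.

Lemma natural_assoc (X Y Z : dcat) : natural (assoc_mor X Y Z).
Proof. by move=> u v h [a [b c]]. Qed.

Lemma natural_lunitor (X : dcat) : natural (lunitor X).
Proof. by move=> u v h b. Qed.

Lemma natural_runitor (X : dcat) : natural (runitor X).
Proof. by move=> u v h a. Qed.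

Lemma dinj_cid (X : dcat) : dinj (cid X).
Proof. by move=> x a b. Qed.

Lemma dinj_lunitor (X : dcat) : dinj (lunitor X).
Proof. by move=> x a b /= E; exact: inj_pair2 _ _ _ _ _ E. Qed.

Lemma dinj_runitor (X : dcat) : dinj (runitor X).
Proof. by move=> x a b /= /(f_equal (@projT1 _ _)). Qed.

Lemma eq_dmor_eq (X Y : dcat) (M N : dmor X Y) : M = N -> dmor_eq M N.
Proof. by move=> ->; split. Qed.

Section SigmaCollection.
Variable P : scoll.
Local Notation PO := (P_ob P).

Definition castP n n' (e : n = n') (y : P n) : P n' := eq_rect n P y n' e.

Lemma existT_castP n n' (e : n = n') (y : P n) : existT P n' (castP e y) = existT P n y.
Proof. by case: n' / e. Qed.

Lemma castP_id n (e : n = n) (y : P n) : castP e y = y.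
Proof. by rewrite (eq_irrelevance e erefl). Qed.

Lemma act_castP n n' (e : n = n') (t : 'S_n) (y : P n) :
  Defs.act (cast_perm e t) (castP e y) = castP e (Defs.act t y).
Proof. by case: n' / e; rewrite cast_perm_id. Qed.

Lemma existT_P_inj n (y y' : P n) : existT P n y = existT P n y' -> y = y'.
Proof. exact: (inj_pair2_eq_dec _ (fun x y : nat => decP (@eqP _ x y))). Qed.

Lemma eq_existT_ord (T : Type) (u1 u2 : PO) (f1 : 'I_(tag u1) -> T) (f2 : 'I_(tag u2) -> T) :
  u1 = u2 -> (forall i1 i2, val i1 = val i2 -> f1 i1 = f2 i2) ->
  existT (fun u : PO => 'I_(tag u) -> T) u1 f1 = existT (fun u : PO => 'I_(tag u) -> T) u2 f2.
Proof.
move=> e H; subst u2; congr existT.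
by apply: functional_extensionality => i; apply: H.
Qed.

Lemma P_hom_ext (u v : PO) (f g : P_hom u v) :
  (forall i, val (P_fibh f i) = val (P_fibh g i)) -> f = g.
Proof.
case: f g => [s es] [t et] /= H.
have eq_st : s = t by apply/permP => i; apply: val_inj; exact: H.
by subst t; congr exist; apply: proof_irrelevance.
Qed.

Lemma P_comp_id_id (u : PO) : P_comp (P_id u) (P_id u) = P_id u.
Proof. by apply: P_hom_ext => k; rewrite P_fibh_comp !P_fibh_id. Qed.

Definition P_hom_of_eq (u v : PO) (e : u = v) : P_hom u v :=
  exist _ (1%g : 'S_(tag u)) (etrans (P_id_proof u) e).

(* The action on arrows of a morphism into [uP P] is forced by naturality,
   as a permutation is determined by its action on the fibre [R(p) = n]. *)
Lemma dmor_uP_ext (X : dcat) (M N : dmor X (uP P)) :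
  (forall x, dob M x = dob N x) ->
  (forall x, existT (fun y : PO => 'I_(tag y) -> fib x) (dob M x) (dnat M x)
           = existT (fun y : PO => 'I_(tag y) -> fib x) (dob N x) (dnat N x)) ->
  natural M -> natural N -> dinj N -> M = N.
Proof.
case: M => obM homM natM; case: N => obN homN natN /= eq_ob eq_nat nM nN injN.
have eq_obM : obM = obN by apply: functional_extensionality.
subst obN.
have {eq_nat} eq_natM : natM = natN.
  apply: functional_extensionality_dep => x; exact: inj_pair2 _ _ _ _ _ (eq_nat x).
subst natN; congr DMor.
do 2 apply: functional_extensionality_dep => ?; apply: functional_extensionality => f.
apply: P_hom_ext => i; congr val; apply: (injN _).
by move: (nM _ _ f i) (nN _ _ f i) => /= -> ->.
Qed.

End SigmaCollection.

Definition blocks (P : scoll) (x : sd_ob (uP P) (uP P)) : 'I_(tag (projT1 x)) -> nat :=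
  fun i => tag (projT2 x i).
Arguments blocks {P} x i.

Section OperadToMonoid.
Variables (P : scoll) (O : operad P).
Local Notation PO := (P_ob P).
Local Notation X := (uP P).

Definition gamma_ob (x : sd_ob X X) : PO :=
  existT P _ (op_g O _ (tagged (projT1 x)) (blocks x) (fun i => tagged (projT2 x i))).

Definition gamma_nat (x : sd_ob X X) : 'I_(tag (gamma_ob x)) -> sd_fib x := unjoin (blocks x).

Lemma gamma_hom_inner (u : PO) (psi psi' : 'I_(tag u) -> PO)
    (tau : forall a, P_hom (psi a) (psi' a)) :
  exists g : P_hom (gamma_ob (existT _ u psi)) (gamma_ob (existT _ u psi')),
    forall a b, val (P_fibh g (join (blocks (existT _ u psi)) a b))
              = offs (blocks (existT _ u psi')) a + P_fibh (tau a) b.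
Proof.
pose s a := sval (tau a).
have def_psi' : psi' = fun a => existT P (tag (psi a)) (Defs.act (s a) (tagged (psi a))).
  by apply: functional_extensionality => a; rewrite (proj2_sig (tau a)).
suff [g Hg] : exists g : P_hom (gamma_ob (existT _ u psi)) (gamma_ob (existT _ u psi')),
    forall a b, val (P_fibh g (join (blocks (existT _ u psi)) a b))
              = offs (blocks (existT _ u psi')) a + s a b by exists g.
clearbody s; clear tau; subst psi'; case: u psi s => n p psi s /=.
have [t [Ht Ea]] := op_equiv2 _ O n p _ (fun i => tagged (psi i)) s.
by exists (exist _ t (congr1 (existT P _) Ea)) => a b /=; rewrite Ht.
Qed.

Lemma gamma_hom_outer (u v : PO) (f : P_hom u v) (psi : 'I_(tag v) -> PO) :
  exists g : P_hom (gamma_ob (existT _ u (fun a => psi (P_fibh f a)))) (gamma_ob (existT _ v psi)),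
    forall a b, val (P_fibh g (join (blocks (existT _ u (fun a => psi (P_fibh f a)))) a b))
              = offs (blocks (existT _ v psi)) (P_fibh f a) + b.
Proof.
case: f => s e; subst v.
have -> : P_fibh (exist _ s erefl : P_hom u (existT P _ (Defs.act s (tagged u)))) = s.
  by apply: functional_extensionality => a; apply: val_inj.
case: u s psi => n p s psi /=.
have [t [Ht Ea]] := op_equiv1 _ O n s p _ (fun i => tagged (psi i)).
by exists (exist _ t Ea) => a b /=; rewrite Ht.
Qed.

Lemma gamma_hom_ex (x y : sd_ob X X) (h : sd_hom x y) :
  exists g : P_hom (gamma_ob x) (gamma_ob y),
    forall c, P_fibh g (join_tag (blocks x) c) = join_tag (blocks y) (sd_fibh h c).
Proof.
case: x h => u psi; case: y => v psi'; case=> f tau /=.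
have [g2 H2] := gamma_hom_inner tau.
have [g1 H1] := gamma_hom_outer f psi'.
exists (P_comp g1 g2) => -[a b]; apply: val_inj; rewrite P_fibh_comp.
have -> : P_fibh g2 (join_tag (blocks (existT _ u psi)) (existT _ a b))
        = join (blocks (existT _ u (fun a => psi' (P_fibh f a)))) a (P_fibh (tau a) b).
  by apply: val_inj; rewrite H2.
by rewrite H1.
Qed.

Definition gamma_hom (x y : sd_ob X X) (h : sd_hom x y) : P_hom (gamma_ob x) (gamma_ob y) :=
  proj1_sig (constructive_indefinite_description _ (gamma_hom_ex h)).

Lemma gamma_hom_join x y (h : sd_hom x y) c :
  P_fibh (gamma_hom h) (join_tag (blocks x) c) = join_tag (blocks y) (sd_fibh h c).
Proof. exact: (proj2_sig (constructive_indefinite_description _ (gamma_hom_ex h))). Qed.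

Lemma gamma_hom_id (x : sd_ob X X) : gamma_hom (sd_id x) = P_id (gamma_ob x).
Proof.
apply: P_hom_ext => k; rewrite P_fibh_id.
by rewrite -{1}(unjoinK _ k) gamma_hom_join sd_fibh_id unjoinK.
Qed.

Lemma gamma_hom_comp (x y z : sd_ob X X) (g : sd_hom y z) (f : sd_hom x y) :
  gamma_hom (sd_comp g f) = P_comp (gamma_hom g) (gamma_hom f).
Proof.
apply: P_hom_ext => k; rewrite P_fibh_comp.
by rewrite -(unjoinK _ k) !gamma_hom_join sd_fibh_comp.
Qed.

Lemma gamma_nat_natural (x y : sd_ob X X) (h : sd_hom x y) k :
  gamma_nat (P_fibh (gamma_hom h) k) = sd_fibh h (gamma_nat k).
Proof. by rewrite /gamma_nat -{1}(unjoinK _ k) gamma_hom_join join_tagK. Qed.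

Definition mu_of_operad : cmor (sd X X) X :=
  @CMor _ _ (@DMor (sd X X) X gamma_ob gamma_hom gamma_nat)
    gamma_hom_id gamma_hom_comp gamma_nat_natural.

Definition eta_of_operad : cmor Defs.one X :=
  @CMor _ _ (@DMor Defs.one X (fun _ => existT P 1 (op_e O)) (fun _ _ _ => P_id _) (fun _ _ => tt))
    (fun _ => erefl)
    (fun _ _ _ _ _ => esym (P_comp_id_id _))
    (fun _ _ _ _ => erefl).

End OperadToMonoid.

Section OperadToMonoidAxioms.
Variables (P : scoll) (O : operad P).
Local Notation PO := (P_ob P).
Local Notation X := (uP P).
Local Notation mu := (mu_of_operad O).
Local Notation eta := (eta_of_operad O).

Lemma dinj_mu_of_operad : dinj mu.
Proof. by move=> x; apply: can_inj (unjoinK _). Qed.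

Let mu_left := dcomp mu (msd mu (cid X)).
Let mu_right := dcomp mu (dcomp (msd (cid X) mu) (assoc_mor X X X)).

Lemma mu_of_operad_assoc_ob x : dob mu_right x = dob mu_left x.
Proof.
case: x => [[[n p] psi] chi] /=.
pose m := blocks (existT (fun d : PO => P_fib d -> PO) (existT P n p) psi).
have -> : (fun a => gamma_ob O (existT _ (psi a) (fun b => chi (existT _ a b))))
        = (fun a => gamma_ob O (existT _ (psi a) (fun b => chi (unjoin m (join m a b))))).
  apply: functional_extensionality => a; congr (gamma_ob O (existT _ _ _)).
  by apply: functional_extensionality => b; rewrite unjoin_join.
exact: esym (op_assoc _ O n p m (fun i => tagged (psi i))
  (fun k => tag (chi (unjoin m k))) (fun k => tagged (chi (unjoin m k)))).
Qed.

Lemma mu_of_operad_assoc : dmor_eq mu_left mu_right.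
Proof.
apply/eq_dmor_eq/esym/dmor_uP_ext.
- exact: mu_of_operad_assoc_ob.
- move=> x; apply: eq_existT_ord; first exact: mu_of_operad_assoc_ob.
  move: x => [[[n p] psi] chi] k k' kk'; apply: esym.
  have e := congr1 tag (mu_of_operad_assoc_ob (existT _ (existT _ (existT P n p) psi) chi)).
  exact: (unjoin_outer_inner (T := fun c => tag (chi c)) e (esym kk')).
- apply: natural_dcomp; first exact: natural_cmor.
  by apply: natural_dcomp; [exact: natural_msd | exact: natural_assoc].
- by apply: natural_dcomp; [exact: natural_cmor | exact: natural_msd].
- apply: dinj_dcomp; first exact: dinj_mu_of_operad.
  by apply: dinj_msd; [exact: dinj_mu_of_operad | exact: dinj_cid].
Qed.

Lemma mu_of_operad_unitl_ob x : dob (dcomp mu (msd eta (cid X))) x = dob (lunitor X) x.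
Proof.
move: x => [[] psi] /=; rewrite /gamma_ob /=.
by rewrite (op_unitl _ O _ (fun _ => tagged (psi tt))); case: (psi tt).
Qed.

Lemma mu_of_operad_unitl : dmor_eq (dcomp mu (msd eta (cid X))) (lunitor X).
Proof.
apply/eq_dmor_eq/dmor_uP_ext.
- exact: mu_of_operad_unitl_ob.
- move=> x; apply: eq_existT_ord; first exact: mu_of_operad_unitl_ob.
  move: x => [[] psi] k k' /= kk'; congr existT; apply: val_inj.
  rewrite /= -kk' -[in RHS](unjoinK _ k) /gamma_nat /=.
  by case: (unjoin _ k) => a b /=; rewrite (ord1 a) offs0.
- by apply: natural_dcomp; [exact: natural_cmor | exact: natural_msd].
- exact: natural_lunitor.
- exact: dinj_lunitor.
Qed.

Lemma mu_of_operad_unitr_ob x : dob (dcomp mu (msd (cid X) eta)) x = dob (runitor X) x.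
Proof. by move: x => [[n p] psi] /=; rewrite /gamma_ob /= (op_unitr _ O n p). Qed.

Lemma mu_of_operad_unitr : dmor_eq (dcomp mu (msd (cid X) eta)) (runitor X).
Proof.
apply/eq_dmor_eq/dmor_uP_ext.
- exact: mu_of_operad_unitr_ob.
- move=> x; apply: eq_existT_ord; first exact: mu_of_operad_unitr_ob.
  move: x => [[n p] psi] k k' /= kk'.
  suff -> : projT1 (gamma_nat k) = k' by [].
  apply: val_inj => /=; rewrite -kk' -[in RHS](unjoinK _ k) /gamma_nat /=.
  by case: (unjoin _ k) => a b /=; rewrite (ord1 b) addn0 offs_cst1.
- by apply: natural_dcomp; [exact: natural_cmor | exact: natural_msd].
- exact: natural_runitor.
- exact: dinj_runitor.
Qed.

Lemma mu_of_operad_iso x : bijective (dnat mu x).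
Proof. by exists (join_tag _); [exact: unjoinK | exact: join_tagK]. Qed.

Lemma mu_of_operad_lex x (i j : 'I_(tag (dob mu x))) :
  i <= j -> lexle (dnat mu x i) (dnat mu x j).
Proof. by rewrite -{1}(unjoinK _ i) -{1}(unjoinK _ j) leq_join_tag. Qed.

Lemma eta_of_operad_iso x : bijective (dnat eta x).
Proof. by exists (fun _ => ord0); [move=> i; rewrite (ord1 i) | case]. Qed.

Definition monoid_of_operad : monoid_str P :=
  MonStr mu_of_operad_assoc mu_of_operad_unitl mu_of_operad_unitr
    mu_of_operad_iso mu_of_operad_lex eta_of_operad_iso.

End OperadToMonoidAxioms.

Section MonoidToOperad.
Variables (P : scoll) (M : monoid_str P).
Local Notation PO := (P_ob P).
Local Notation X := (uP P).
Local Notation mu := (ms_mu M).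
Local Notation eta := (ms_eta M).

Lemma mu_arity (x : sd_ob X X) : tag (dob mu x) = \sum_(i < tag (projT1 x)) blocks x i.
Proof.
have [g dnatK gK] := ms_mu_iso M x.
apply/eqP; rewrite eqn_leq; apply/andP; split.
  have := leq_card (fun k => join_tag (blocks x) (dnat mu x k)).
  by rewrite !card_ord; apply=> a b /join_tag_inj /(can_inj dnatK).
have := leq_card (fun s => g (unjoin (blocks x) s)).
by rewrite !card_ord; apply=> a b /(can_inj gK) /(can_inj (unjoinK _)).
Qed.

(* An order-preserving bijection between two finite linear orders of the same
   size is unique: [rho] is necessarily the lexicographic indexing. *)
Lemma join_dnat_mu x k : val (join_tag (blocks x) (dnat mu x k)) = val k.
Proof.
apply: (incr_ord_id (f := fun k => val (join_tag (blocks x) (dnat mu x k)))) => [i j ij|i].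
  have le_ij : join_tag (blocks x) (dnat mu x i) <= join_tag (blocks x) (dnat mu x j).
    by rewrite leq_join_tag; exact: ms_mu_ord (ltnW ij).
  rewrite ltn_neqAle le_ij andbT.
  apply/negP => /eqP /val_inj /join_tag_inj /(bij_inj (ms_mu_iso M x)) eq_ij.
  by move: ij; rewrite eq_ij ltnn.
by rewrite mu_arity ltn_ord.
Qed.

Lemma dnat_mu_join x k c : val k = val (join_tag (blocks x) c) -> dnat mu x k = c.
Proof. by move=> kc; apply/join_tag_inj/val_inj; rewrite join_dnat_mu. Qed.

Definition sd_of n (p : P n) (m : 'I_n -> nat) (q : forall i, P (m i)) : sd_ob X X :=
  existT (fun d : PO => P_fib d -> PO) (existT P n p) (fun i => existT P (m i) (q i)).

Definition mu_gamma (x : sd_ob X X) : P (\sum_(i < tag (projT1 x)) blocks x i) :=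
  castP (mu_arity x) (tagged (dob mu x)).

Lemma mu_gammaE x : existT P _ (mu_gamma x) = dob mu x.
Proof. by rewrite /mu_gamma existT_castP; case: (dob mu x). Qed.

Definition mon_gamma n (p : P n) (m : 'I_n -> nat) (q : forall i, P (m i)) :
  P (\sum_(i < n) m i) := mu_gamma (sd_of p q).

Lemma mon_gammaE n (p : P n) (m : 'I_n -> nat) (q : forall i, P (m i)) :
  existT P _ (mon_gamma p q) = dob mu (sd_of p q).
Proof. exact: (mu_gammaE (sd_of p q)). Qed.

Lemma eta_arity : tag (dob eta tt) = 1.
Proof.
have [g dnatK _] := ms_eta_iso M tt.
have := leq_card (dnat eta tt) (can_inj dnatK); rewrite card_ord card_unit.
by case: (g tt) => i; case: (tag _) => [|[|]].
Qed.

Definition mon_unit : P 1 := castP eta_arity (tagged (dob eta tt)).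

Lemma mon_unitE : existT P 1 mon_unit = dob eta tt.
Proof. by rewrite /mon_unit existT_castP; case: (dob eta tt). Qed.

(* Both equivariance axioms are instances of this consequence of the
   functoriality of [mu]. *)
Lemma mu_hom_perm (x1 x2 : sd_ob X X) (h : sd_hom x1 x2) :
  exists t : 'S_(\sum_(i < tag (projT1 x1)) blocks x1 i),
    (forall c, val (t (join_tag (blocks x1) c)) = val (join_tag (blocks x2) (sd_fibh h c)))
    /\ existT P _ (Defs.act t (mu_gamma x1)) = existT P _ (mu_gamma x2).
Proof.
exists (cast_perm (mu_arity x1) (sval (dhom mu h))); split.
  move=> c; rewrite cast_permE.
  set k := cast_ord (esym (mu_arity x1)) (join_tag (blocks x1) c).
  have dk : dnat mu x1 k = c by apply: dnat_mu_join.
  have E := @cm_nat _ _ mu _ _ h k; rewrite dk /= in E.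
  by rewrite -E join_dnat_mu.
rewrite /mu_gamma act_castP existT_castP mu_gammaE.
exact: (proj2_sig (dhom mu h)).
Qed.

Lemma mon_gamma_unitl (m : 'I_1 -> nat) (q : forall i, P (m i)) :
  existT P _ (mon_gamma mon_unit q) = existT P _ (q ord0).
Proof.
rewrite mon_gammaE; case: (ms_unitl M) => unitl_ob _ _.
move: (unitl_ob (existT _ tt (fun _ => existT P (m ord0) (q ord0)))) => /= <-.
congr (dob mu _); apply: eq_existT_ord; first exact: mon_unitE.
by move=> i1 i2 _; rewrite (ord1 i1).
Qed.

Lemma mon_gamma_unitr n (p : P n) :
  existT P _ (mon_gamma p (fun _ : 'I_n => mon_unit)) = existT P n p.
Proof.
rewrite mon_gammaE; case: (ms_unitr M) => unitr_ob _ _.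
move: (unitr_ob (existT _ (existT P n p) (fun _ => tt))) => /= <-.
congr (dob mu (existT _ _ _)); apply: functional_extensionality => i.
exact: mon_unitE.
Qed.

Lemma mon_gamma_assoc n (p : P n) (m : 'I_n -> nat) (q : forall i, P (m i))
      (l : 'I_(\sum_(i < n) m i) -> nat) (r : forall j, P (l j)) :
  existT P _ (mon_gamma (mon_gamma p q) r)
  = existT P _ (mon_gamma p (fun i => mon_gamma (q i) (fun j => r (join m i j)))).
Proof.
pose chi (c : sd_fib (sd_of p q)) := existT P (l (join_tag m c)) (r (join_tag m c)).
have def_x : sd_of (mon_gamma p q) r
           = existT _ (dob mu (sd_of p q)) (fun k => chi (dnat mu _ k)).
  apply: eq_existT_ord; first exact: mon_gammaE.
  move=> k k' kk'; rewrite /chi.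
  by have -> : join_tag m (dnat mu (sd_of p q) k') = k by apply/val_inj; rewrite kk' (join_dnat_mu k').
case: (ms_assoc M) => assoc_ob _ _.
rewrite !mon_gammaE def_x; move: (assoc_ob (existT _ (sd_of p q) chi)) => /= ->.
congr (dob mu (existT _ _ _)); apply: functional_extensionality => i.
exact: esym (mon_gammaE (q i) (fun j => r (join m i j))).
Qed.

Lemma mon_gamma_equiv1 n (s : 'S_n) (p : P n) (m : 'I_n -> nat) (q : forall i, P (m i)) :
  exists t : 'S_(\sum_(i < n) m (s i)),
    (forall a (b : 'I_(m (s a))),
        nat_of_ord (t (join (fun i => m (s i)) a b)) = nat_of_ord (join m (s a) b))
    /\ existT P _ (Defs.act t (mon_gamma p (fun i => q (s i))))
       = existT P _ (mon_gamma (Defs.act s p) q).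
Proof.
pose f : P_hom (existT P n p) (existT P n (Defs.act s p)) := exist _ s erefl.
have Ef a : P_fibh f a = s a by apply: val_inj.
pose tau a := P_hom_of_eq (congr1 (fun i => existT P (m i) (q i)) (esym (Ef a))).
have [t [Ht Et]] := mu_hom_perm (existT _ f tau : sd_hom (sd_of p (fun i => q (s i))) (sd_of _ q)).
exists t; split=> // a b; have := Ht (existT _ a b).
by rewrite /= Ef perm1.
Qed.

Lemma mon_gamma_equiv2 n (p : P n) (m : 'I_n -> nat) (q : forall i, P (m i))
    (tau : forall i, 'S_(m i)) :
  exists t : 'S_(\sum_(i < n) m i),
    (forall a (b : 'I_(m a)), t (join m a b) = join m a (tau a b))
    /\ Defs.act t (mon_gamma p q) = mon_gamma p (fun i => Defs.act (tau i) (q i)).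
Proof.
pose tau' a : P_hom (existT P (m a) (q a)) (existT P (m a) (Defs.act (tau a) (q a))) :=
  exist _ (tau a) erefl.
pose tau'' a := P_comp (P_hom_of_eq (congr1 (fun i => existT P (m i) (Defs.act (tau i) (q i)))
                                           (esym (@P_fibh_id P (existT P n p) a)))) (tau' a).
have [t [Ht Et]] := mu_hom_perm
  (existT _ (P_id _) tau'' : sd_hom (sd_of p q) (sd_of p (fun i => Defs.act (tau i) (q i)))).
exists t; split; last exact: existT_P_inj Et.
move=> a b; apply: val_inj; have := Ht (existT _ a b).
by rewrite /= mulg1 P_fibh_id.
Qed.

Definition operad_of_monoid : operad P :=
  Operad P mon_unit (fun n p m q => mon_gamma p q)
    mon_gamma_unitl mon_gamma_unitr mon_gamma_assoc mon_gamma_equiv1 mon_gamma_equiv2.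

End MonoidToOperad.

Section RoundTrip.
Variable P : scoll.

Lemma operad_ext (O1 O2 : operad P) :
  op_e O1 = op_e O2 -> (forall n p m q, op_g O1 n p m q = op_g O2 n p m q) -> O1 = O2.
Proof.
case: O1 O2 => e1 g1 ? ? ? ? ? [e2 g2 ? ? ? ? ?] /= eq_e eq_g; subst e2.
have {}eq_g : g1 = g2.
  do 4 apply: functional_extensionality_dep => ?; exact: eq_g.
by subst g2; f_equal; apply: proof_irrelevance.
Qed.

Lemma cmor_ext (Y Z : dcat) (C1 C2 : cmor Y Z) : cm C1 = cm C2 -> C1 = C2.
Proof.
case: C1 C2 => c1 ? ? ? [c2 ? ? ?] /= eq_c; subst c2.
by f_equal; apply: proof_irrelevance.
Qed.

Lemma monoid_str_ext (M1 M2 : monoid_str P) :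
  ms_mu M1 = ms_mu M2 -> ms_eta M1 = ms_eta M2 -> M1 = M2.
Proof.
case: M1 M2 => mu1 eta1 ? ? ? ? ? ? [mu2 eta2 ? ? ? ? ? ?] /= eq_mu eq_eta.
by subst mu2 eta2; f_equal; apply: proof_irrelevance.
Qed.

Lemma monoid_of_operadK : cancel (@monoid_of_operad P) (@operad_of_monoid P).
Proof.
move=> O; apply: operad_ext => /= [|n p m q].
  by rewrite /mon_unit castP_id.
by rewrite /mon_gamma /mu_gamma castP_id.
Qed.

Section OperadOfMonoid.
Variable M : monoid_str P.
Local Notation O := (operad_of_monoid M).

Lemma mu_of_operad_of_monoid_ob x : dob (mu_of_operad O) x = dob (ms_mu M) x.
Proof.
move: x => [[n p] psi]; rewrite /= /gamma_ob /= mon_gammaE.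
f_equal; rewrite /sd_of; congr existT.
by apply: functional_extensionality => i; rewrite /blocks /=; case: (psi i).
Qed.

Lemma eta_of_operad_of_monoid_ob x : dob (eta_of_operad O) x = dob (ms_eta M) x.
Proof. by case: x; exact: mon_unitE. Qed.

Lemma mu_of_operad_of_monoid : mu_of_operad O = ms_mu M.
Proof.
apply/cmor_ext/dmor_uP_ext.
- exact: mu_of_operad_of_monoid_ob.
- move=> x; apply: eq_existT_ord; first exact: mu_of_operad_of_monoid_ob.
  move=> k k' kk'; apply: esym; apply: dnat_mu_join.
  by rewrite -kk' unjoinK.
- exact: natural_cmor.
- exact: natural_cmor.
- by move=> x; apply: bij_inj (ms_mu_iso M x).
Qed.

Lemma eta_of_operad_of_monoid : eta_of_operad O = ms_eta M.
Proof.
apply/cmor_ext/dmor_uP_ext.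
- exact: eta_of_operad_of_monoid_ob.
- move=> x; apply: eq_existT_ord; first exact: eta_of_operad_of_monoid_ob.
  by move=> _ k _ /=; move: (dnat (ms_eta M) x k); clear k; case: x; case.
- exact: natural_cmor.
- exact: natural_cmor.
- by move=> x; apply: bij_inj (ms_eta_iso M x).
Qed.

End OperadOfMonoid.

Lemma operad_of_monoidK : cancel (@operad_of_monoid P) (@monoid_of_operad P).
Proof.
move=> M; apply: monoid_str_ext.
- exact: mu_of_operad_of_monoid.
- exact: eta_of_operad_of_monoid.
Qed.

End RoundTrip.

Theorem proposition2p3 (P : scoll) :
  exists (f : operad P -> monoid_str P) (g : monoid_str P -> operad P),
    cancel f g /\ cancel g f.
Proof.
exists (@monoid_of_operad P), (@operad_of_monoid P).
by split; [exact: monoid_of_operadK | exact: operad_of_monoidK].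
Qed.
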